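(* Every transformer with average hard attention (AHA), as defined in the context, can be simulated by $\mathbf{PFO}^2$: each map $\bar w\mapsto H^{(\ell)}(\bar w)$ and the output map $\bar w\mapsto o(\bar w)$ is simulated by $\mathbf{PFO}^2$ over $\bar\Sigma$.
   Context: Fixed precision: $\mathbb{F}$ is a fixed finite set of floating-point values containing $0,1,-1,\infty,-\infty$; every arithmetic operation used below returns a value in $\mathbb{F}$, with conventions $\infty+f=\infty$, $-\infty+f=-\infty$ for $f\ne\mp\infty$; $f\cdot(\pm\infty)=\pm\infty$ for $f>0$ and $=\mp\infty$ for $f<0$; $f/\infty=0$ for finite $f$; $\exp(\infty)=\infty$, $\exp(-\infty)=0$. Under fixed precision the attention weights at any position have at most $N_{\max}=\lfloor \min(1,\max(\mathbb{F}\setminus\{\infty\}))/\min(\mathbb{F}_{>0})\rfloor$ nonzero entries, and a sum of nonnegative elements of $\mathbb{F}$ is determined by how many summands take each value, counted up to a fixed threshold. Given a finite alphabet $\Sigma$ and fresh $\mathrm{EOS}\notin\Sigma$, $\bar\Sigma=\Sigma\cup\{\mathrm{EOS}\}$ and $\bar w=w_1\cdots w_Nw_{N+1}$ with $w_{N+1}=\mathrm{EOS}$. A transformer of width $D$ and depth $L$ (parameters in $\mathbb{F}$) computes $H^{(\ell)}(\bar w)\in\mathbb{F}^{D\times(N+1)}$, $\ell\in\{0,0.5,\dots,L\}$: $H^{(0)}_{:,n}=e(w_n)$; $H^{(\ell+0.5)}=\mathrm{LN}(A^{(\ell)}(H^{(\ell)})+H^{(\ell)})$, $H^{(\ell+1)}=\mathrm{LN}(F^{(\ell)}(H^{(\ell+0.5)})+H^{(\ell+0.5)})$,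 with $\mathrm{LN}$ columnwise layer normalization, $F^{(\ell)}(H)_{:,n}=W^{F2}\mathrm{ReLU}(W^{F1}H_{:,n}+b^{F1})+b^{F2}$, $Q=W^QH,K=W^KH,V=W^VH$, $S_{n,m}=Q_{:,n}\cdot K_{:,m}/\sqrt D$, $A(H)_{:,n}=\sum_{m<n}\alpha_{n,m}V_{:,m}$, and output $o(\bar w)=\theta^\top H^{(L)}_{:,N+1}+b$. With average hard attention the weights are $\alpha_{n,m}=\mathbf{1}[S_{n,m}=\max_{i<n}S_{n,i}]\,/\,\sum_{j<n}\mathbf{1}[S_{n,j}=\max_{i<n}S_{n,i}]$ for $m<n$. $\mathbf{PFO}^2$ over $\Gamma$: formulas in the two variables $x,y$ (re-quantifiable), atomic formulas $\pi_a(z)$ ($a\in\Gamma$) and $z<z'$, closed under $\wedge,\neg$, $\exists y<x:\phi(x,y)$, $\exists x<y:\phi(x,y)$, and, for $\phi(x)$ with only free variable $x$, $\exists x<y:\phi(x)$ and $\exists x:\phi(x)$ (symmetrically in $x,y$); standard semantics. A map $G$ assigning to each $\bar w$ a matrix $G(\bar w)\in\mathbb{F}^{D\times(N+1)}$ is simulated by $\mathbf{PFO}^2$ if for every $d$ and $f\in\mathbb{F}$ there is a $\mathbf{PFO}^2$ formula $\phi(x)$ over $\bar\Sigma$ with one free variable such that for all $w$ and $n\in\{1,\dots,N+1\}$: $G_{d,n}(\bar w)=f$ iff $\bar w,n\models\phi(x)$ (for the scalar $o$, take $n=N+1$). *)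

From HB Require Import structures.
From mathcomp Require Import all_boot all_order all_algebra.
Set Implicit Arguments. Unset Strict Implicit. Unset Printing Implicit Defensive.
Import Order.TTheory GRing.Theory Num.Theory.

(* Extended rationals: the values a floating-point number can take.          *)
Inductive xr := XFin of rat | XPInf | XNInf.

Definition xr_code (x : xr) : option (option rat) :=
  match x with XFin r => Some (Some r) | XPInf => Some None | XNInf => None end.
Definition xr_decode (o : option (option rat)) : xr :=
  match o with Some (Some r) => XFin r | Some None => XPInf | None => XNInf end.
Lemma xr_codeK : cancel xr_code xr_decode. Proof. by case. Qed.
HB.instance Definition _ := Countable.copy xr (can_type xr_codeK).

Local Open Scope ring_scope.

Definition xle (a b : xr) : bool :=
  match a, b with
  | XNInf, _ => true
  | _, XPInf => true
  | XFin r, XFin s => r <= s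
  | _, _ => false
  end.
Definition xlt (a b : xr) : bool := xle a b && (a != b).

(* Fixed-precision arithmetic: a finite set F of values (given as a finite   *)
(* type with an injective valuation into the extended rationals), the        *)
(* distinguished values, and the F-valued arithmetic operations.  fsum is    *)
(* the (fixed-precision) value of a sum  \sum_i x_i  of elements of F.       *)
Record fparith := FParith {
  fT : finType;
  fval : fT -> xr;
  fzero : fT; fone : fT; fmone : fT; fpinf : fT; fninf : fT;
  fadd : fT -> fT -> fT;
  fmul : fT -> fT -> fT;
  fdiv : fT -> fT -> fT;
  fsqrt : fT -> fT;
  fexp : fT -> fT;
  fsum : seq fT -> fT
}.

Section FP.
Variable A : fparith.
Local Notation F := (fT A).

Definition fle (x y : F) : bool := xle (fval x) (fval y).
Definition flt (x y : F) : bool := xlt (fval x) (fval y).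
Definition isfin (x : F) : bool := if fval x is XFin _ then true else false.
Definition ratv (x : F) : rat := if fval x is XFin r then r else 0.

Definition fsub (x y : F) : F := fadd x (fmul (fmone A) y).
Definition frelu (x : F) : F := if fle x (fzero A) then fzero A else x.
Definition natF (n : nat) : F := fsum (nseq n (fone A)).

Definition fmaxfin : rat := \big[Num.max/(1:rat)]_(x : F | isfin x) ratv x.
Definition fminpos : rat := \big[Num.min/(1:rat)]_(x : F | isfin x && (0 < ratv x)) ratv x.
Definition Nmax : nat := `| Num.floor (Num.min (1:rat) fmaxfin / fminpos) |%N.

Definition aha_ind (s : seq F) (x : F) : F :=
  if all (fun y => fle y x) s then fone A else fzero A.
Definition aha_weights (s : seq F) : seq F :=
  let den := fsum (map (aha_ind s) s) in
  map (fun x => fdiv (aha_ind s x) den) s.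

Record fp_ok : Prop := FPOk {
  fval_inj : injective (@fval A);
  fval_zero : fval (fzero A) = XFin 0;
  fval_one : fval (fone A) = XFin 1;
  fval_mone : fval (fmone A) = XFin (-1);
  fval_pinf : fval (fpinf A) = XPInf;
  fval_ninf : fval (fninf A) = XNInf;
  add_pinf : forall f, f != fninf A -> fadd (fpinf A) f = fpinf A;
  add_ninf : forall f, f != fpinf A -> fadd (fninf A) f = fninf A;
  mul_pos_pinf : forall f, flt (fzero A) f -> fmul f (fpinf A) = fpinf A;
  mul_pos_ninf : forall f, flt (fzero A) f -> fmul f (fninf A) = fninf A;
  mul_neg_pinf : forall f, flt f (fzero A) -> fmul f (fpinf A) = fninf A;
  mul_neg_ninf : forall f, flt f (fzero A) -> fmul f (fninf A) = fpinf A;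
  div_fin_pinf : forall f, isfin f -> fdiv f (fpinf A) = fzero A;
  exp_pinf : fexp (fpinf A) = fpinf A;
  exp_ninf : fexp (fninf A) = fzero A;
  (* 0 * f = 0 (also fixes the unspecified case 0 * (+-oo)) *)
  mul_zero : forall f, fmul (fzero A) f = fzero A;
  fsum_perm : forall s1 s2 : seq F, perm_eq s1 s2 -> fsum s1 = fsum s2;
  fsum_zero : forall s : seq F, fsum (fzero A :: s) = fsum s;
  fsum_threshold : exists T : nat, forall s1 s2 : seq F,
      all (fle (fzero A)) s1 -> all (fle (fzero A)) s2 ->
      (forall f, minn (count_mem f s1) T = minn (count_mem f s2) T) ->
      fsum s1 = fsum s2;
  aha_Nmax : forall s : seq F, (count (fun a => a != fzero A) (aha_weights s) <= Nmax)%N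
}.

Unset Implicit Arguments.
Variable Sigma : finType.

Record layer (D : nat) := Layer {
  WQ : 'I_D -> 'I_D -> F;
  WK : 'I_D -> 'I_D -> F;
  WV : 'I_D -> 'I_D -> F;
  dff : nat;
  WF1 : 'I_dff -> 'I_D -> F;
  bF1 : 'I_dff -> F;
  WF2 : 'I_D -> 'I_dff -> F;
  bF2 : 'I_D -> F;
  ln1_g : 'I_D -> F; ln1_b : 'I_D -> F; ln1_eps : F;
  ln2_g : 'I_D -> F; ln2_b : 'I_D -> F; ln2_eps : F
}.

Arguments WQ {D} l _ _. Arguments WK {D} l _ _. Arguments WV {D} l _ _.
Arguments dff {D} l. Arguments WF1 {D} l _ _. Arguments bF1 {D} l _.
Arguments WF2 {D} l _ _. Arguments bF2 {D} l _.
Arguments ln1_g {D} l _. Arguments ln1_b {D} l _. Arguments ln1_eps {D} l.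
Arguments ln2_g {D} l _. Arguments ln2_b {D} l _. Arguments ln2_eps {D} l.

Record transformer := Transformer {
  tD : nat;
  temb : option Sigma -> 'I_tD -> F;   (* None = EOS *)
  tlayers : seq (layer tD);
  ttheta : 'I_tD -> F;
  tb : F
}.

Arguments tD t : clear implicits. Arguments temb t _ _ : clear implicits.
Arguments tlayers t : clear implicits.
Arguments ttheta t _ : clear implicits. Arguments tb t : clear implicits.

(* columns indexed by positions (0-based) *)
Definition mat (D : nat) := nat -> 'I_D -> F.

Definition mv {p q : nat} (W : 'I_p -> 'I_q -> F) (h : 'I_q -> F) : 'I_p -> F :=
  fun i => fsum [seq fmul (W i j) (h j) | j <- enum 'I_q].
Definition dotF {D : nat} (h g : 'I_D -> F) : F :=
  fsum [seq fmul (h d) (g d) | d <- enum 'I_D].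
Definition addv {D : nat} (x y : 'I_D -> F) : 'I_D -> F := fun d => fadd (x d) (y d).

Definition LN {D : nat} (g b : 'I_D -> F) (eps : F) (x : 'I_D -> F) : 'I_D -> F :=
  let mu := fdiv (fsum [seq x d | d <- enum 'I_D]) (natF D) in
  let xc := fun d => fsub (x d) mu in
  let var := fdiv (fsum [seq fmul (xc d) (xc d) | d <- enum 'I_D]) (natF D) in
  fun d => fadd (fmul (g d) (fdiv (xc d) (fsqrt (fadd var eps)))) (b d).

(* average hard attention, strictly past positions m < n *)
Definition attn {D : nat} (ly : layer D) (H : mat D) (n : nat) : 'I_D -> F :=
  let scores := [seq fdiv (dotF (mv (WQ ly) (H n)) (mv (WK ly) (H m)))
                          (fsqrt (natF D)) | m <- iota 0 n] in
  let alpha := aha_weights scores in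
  fun d => fsum [seq fmul (nth (fzero A) alpha m) (mv (WV ly) (H m) d) | m <- iota 0 n].

Definition ffn {D : nat} (ly : layer D) (h : 'I_D -> F) : 'I_D -> F :=
  fun d => fadd (mv (WF2 ly) (fun k => frelu (fadd (mv (WF1 ly) h k) (bF1 ly k))) d)
                (bF2 ly d).

Definition attn_sub {D : nat} (ly : layer D) (H : mat D) : mat D :=
  fun n => LN (ln1_g ly) (ln1_b ly) (ln1_eps ly) (addv (attn ly H n) (H n)).
Definition ffn_sub {D : nat} (ly : layer D) (H : mat D) : mat D :=
  fun n => LN (ln2_g ly) (ln2_b ly) (ln2_eps ly) (addv (ffn ly (H n)) (H n)).

(* [H^(0); H^(0.5); H^(1); ...; H^(L)] *)
Fixpoint run {D : nat} (ls : seq (layer D)) (H : mat D) : seq (mat D) :=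
  match ls with
  | [::] => [:: H]
  | l :: ls' => let H1 := attn_sub l H in H :: H1 :: run ls' (ffn_sub l H1)
  end.

Definition barw (w : seq Sigma) : seq (option Sigma) := rcons (map Some w) None.

Definition H0 (T : transformer) (w : seq Sigma) : mat (tD T) :=
  fun n => temb T (nth None (barw w) n).

(* Hstate T w k = H^(k/2)(\bar w), for k <= 2L *)
Definition Hstate (T : transformer) (w : seq Sigma) (k : nat) : mat (tD T) :=
  nth (H0 T w) (run (tlayers T) (H0 T w)) k.

(* o(\bar w) = theta^T H^(L)_{:,N+1} + b  (position N+1 is index size w) *)
Definition output (T : transformer) (w : seq Sigma) : F :=
  fadd (fsum [seq fmul (ttheta T d) (Hstate T w (2 * size (tlayers T)) (size w) d)
             | d <- enum 'I_(tD T)]) (tb T).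

End FP.
Arguments barw {Sigma} w.
Arguments H0 {A Sigma} T w _ _.
Arguments Hstate {A Sigma} T w k _ _.
Arguments output {A Sigma} T w.
Arguments tD {A Sigma} t.
Arguments tlayers {A Sigma} t.
Set Implicit Arguments.

Local Close Scope ring_scope.
Inductive var := VX | VY.
Definition other (v : var) : var := if v is VX then VY else VX.
Definition veqb (u v : var) : bool :=
  match u, v with VX, VX | VY, VY => true | _, _ => false end.

Inductive pfo (S : Type) :=
| PSym of S & var
| PLt of var & var
| PAnd of pfo S & pfo S
| PNot of pfo S
| PExLt of var & pfo S           (* PExLt z phi : exists z' < z : phi, z' = other z *)
| PEx of var & pfo S.            (* PEx z phi : exists z : phi   (phi may only have z free) *)

Arguments PLt {S}.

Fixpoint pfo_free (S : Type) (p : pfo S) (v : var) : bool :=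
  match p with
  | PSym _ z => veqb z v
  | PLt z1 z2 => veqb z1 v || veqb z2 v
  | PAnd p q => pfo_free p v || pfo_free q v
  | PNot p => pfo_free p v
  | PExLt z p => veqb z v || (pfo_free p v && ~~ veqb (other z) v)
  | PEx z p => pfo_free p v && ~~ veqb z v
  end.

Fixpoint pfo_wf (S : Type) (p : pfo S) : bool :=
  match p with
  | PSym _ _ | PLt _ _ => true
  | PAnd p q => pfo_wf p && pfo_wf q
  | PNot p => pfo_wf p
  | PExLt _ p => pfo_wf p
  | PEx z p => pfo_wf p && ~~ pfo_free p (other z)
  end.

Definition upd (env : var -> nat) (z : var) (m : nat) : var -> nat :=
  fun v => if veqb v z then m else env v.

(* semantics over a word u (positions 0 .. size u - 1) *)
Fixpoint pfo_sat (S : eqType) (u : seq S) (env : var -> nat) (p : pfo S) : Prop :=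
  match p with
  | PSym a z => env z < size u /\ nth a u (env z) = a
  | PLt z1 z2 => env z1 < env z2
  | PAnd p q => pfo_sat u env p /\ pfo_sat u env q
  | PNot p => ~ pfo_sat u env p
  | PExLt z p => exists m, m < env z /\ pfo_sat u (upd env (other z) m) p
  | PEx z p => exists m, m < size u /\ pfo_sat u (upd env z m) p
  end.

Definition simulated_mat (A : fparith) (Sigma : finType) (D : nat)
    (G : seq Sigma -> mat A D) : Prop :=
  forall (d : 'I_D) (f : fT A), exists phi : pfo (option Sigma),
    pfo_wf phi /\ ~~ pfo_free phi VY /\
    forall (w : seq Sigma) (n : nat), n <= size w ->
      (G w n d = f <-> pfo_sat (barw w) (fun _ => n) phi).

Definition simulated_scalar (A : fparith) (Sigma : finType)
    (G : seq Sigma -> fT A) : Prop :=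
  forall f : fT A, exists phi : pfo (option Sigma),
    pfo_wf phi /\ ~~ pfo_free phi VY /\
    forall w : seq Sigma, (G w = f <-> pfo_sat (barw w) (fun _ => size w) phi).

From Pilot Require Import Defs.
From mathcomp Require Import all_boot all_order all_algebra.
From mathcomp Require Import zify.
From Stdlib Require Import FunctionalExtensionality.
Set Implicit Arguments. Unset Strict Implicit.

(* A column of a fixed-precision transformer ranges over a finite set, so it suffices to
   define, for each possible column value h, the set of positions whose column is h.
   For H^(0) this is a disjunction of letter predicates, and feed-forward sublayers act
   column by column.  For an attention sublayer, the output at position n depends only on
   the column at n and on how many earlier positions carry each column value, counted up
   to a threshold K: the normalising denominator is a sum of 0/1 values, which fixed
   precision sees only up to a threshold, and at most N_max weights are nonzero.  These
   thresholded counts are PFO^2-definable, since "at least k positions y < x satisfy psi"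
   is a chain of k bounded quantifiers in which x and y swap roles at each step. *)

Section CountUpto.
Variable X : finType.

Definition eq_count_upto (K : nat) (s1 s2 : seq X) :=
  forall x, minn (count_mem x s1) K = minn (count_mem x s2) K.

Lemma count_sum_mem (P : pred X) (s : seq X) :
  count P s = \sum_(x | P x) count_mem x s.
Proof.
elim: s => [|a s IH] /=; first by rewrite big1.
rewrite IH big_split /=; congr (_ + _).
case Pa: (P a).
  by rewrite (bigD1 a) //= eqxx big1 // => x /andP[_ /negbTE]; rewrite eq_sym => ->.
by rewrite big1 // => x Px; case: eqP => // xa; rewrite xa Px in Pa.
Qed.

Lemma eq_count_upto_count K M (P : pred X) s1 s2 :
  eq_count_upto K s1 s2 -> M <= K -> minn (count P s1) M = minn (count P s2) M.
Proof.
move=> eqK MK; rewrite !count_sum_mem.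
apply: (big_ind2 (fun a b => minn a M = minn b M)) => //.
  by move=> x1 x2 y1 y2; lia.
by move=> x _; have := eqK x; lia.
Qed.

Lemma eq_count_upto_all K (P : pred X) s1 s2 :
  eq_count_upto K s1 s2 -> 0 < K -> all P s1 = all P s2.
Proof.
move=> eqK K_gt0; have := eq_count_upto_count (predC P) eqK K_gt0.
move=> e; apply: negb_inj; rewrite -!has_predC !has_count.
by apply/idP/idP; lia.
Qed.

Lemma eq_count_upto_map (Y : eqType) (f : X -> Y) K M s1 s2 :
  eq_count_upto K s1 s2 -> M <= K ->
  forall y, minn (count_mem y (map f s1)) M = minn (count_mem y (map f s2)) M.
Proof. by move=> eqK MK y; rewrite !count_map; apply: eq_count_upto_count eqK MK. Qed.

Definition seq_of_counts (c : X -> nat) : seq X :=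
  flatten [seq nseq (c x) x | x <- enum X].

Lemma count_mem_seq_of_counts c x : count_mem x (seq_of_counts c) = c x.
Proof.
rewrite /seq_of_counts count_flatten -map_comp.
under eq_map => y /= do rewrite count_nseq.
rewrite sumnE big_map big_enum /= (bigD1 x) //= eqxx mul1n big1 ?addn0 //.
by move=> y /negbTE; rewrite eq_sym => ->.
Qed.
End CountUpto.

Notation sat_at u n p := (pfo_sat u (fun=> n) p).

Section Formulas.
Variable S : eqType.
Implicit Types (p q : pfo S) (env : var -> nat) (u : seq S).

Lemma veqbC (a b : var) : veqb a b = veqb b a. Proof. by case: a; case: b. Qed.

Lemma otherK : involutive other. Proof. by case. Qed.

Lemma eq_pfo_sat p u env1 env2 :
  (forall v, pfo_free p v -> env1 v = env2 v) ->
  (pfo_sat u env1 p <-> pfo_sat u env2 p).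
Proof.
have upd_eq env env' z m p' : (forall v, pfo_free p' v && ~~ veqb z v -> env v = env' v) ->
    forall v, pfo_free p' v -> upd env z m v = upd env' z m v.
  move=> e v fv; rewrite /upd; case zv: (veqb v z) => //.
  by apply: e; rewrite fv veqbC zv.
elim: p env1 env2 => [a z|z1 z2|p IHp q IHq|p IHp|z p IHp|z p IHp] env1 env2 e /=.
- by rewrite (e z) //; case: (z).
- by rewrite (e z1) ?(e z2) //; case: (z1); case: (z2).
- by rewrite (IHp env1 env2) ?(IHq env1 env2) // => v fv; apply: e; rewrite /= fv ?orbT.
- by rewrite (IHp env1 env2).
- rewrite (e z); last by case: (z).
  have e' m : forall v, pfo_free p v -> upd env1 (other z) m v = upd env2 (other z) m v.
    by apply: upd_eq => v fv; apply: e => /=; rewrite fv orbT.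
  by split=> -[m [mz sm]]; exists m; split=> //;
    [rewrite -(IHp _ _ (e' m)) | rewrite (IHp _ _ (e' m))].
- have e' m : forall v, pfo_free p v -> upd env1 z m v = upd env2 z m v.
    by apply: upd_eq => v fv; apply: e.
  by split=> -[m [mu sm]]; exists m; split=> //;
    [rewrite -(IHp _ _ (e' m)) | rewrite (IHp _ _ (e' m))].
Qed.

Fixpoint pfo_swap p : pfo S :=
  match p with
  | PSym a z => PSym a (other z)
  | PLt z1 z2 => PLt (other z1) (other z2)
  | PAnd p q => PAnd (pfo_swap p) (pfo_swap q)
  | PNot p => PNot (pfo_swap p)
  | PExLt z p => PExLt (other z) (pfo_swap p)
  | PEx z p => PEx (other z) (pfo_swap p)
  end.

Lemma pfo_sat_swap p u env :
  pfo_sat u env (pfo_swap p) <-> pfo_sat u (env \o other) p.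
Proof.
have upd_other z m env' v : (upd env' (other z) m \o other) v = upd (env' \o other) z m v.
  by case: v; case: z.
elim: p env => [a z|z1 z2|p IHp q IHq|p IHp|z p IHp|z p IHp] env //=.
- by rewrite IHp IHq.
- by rewrite IHp.
- by split=> -[m [mz sm]]; exists m; split=> //; move: sm;
    rewrite IHp (eq_pfo_sat _ (fun v _ => upd_other (other z) m env v)).
- by split=> -[m [mz sm]]; exists m; split=> //; move: sm;
    rewrite IHp (eq_pfo_sat _ (fun v _ => upd_other z m env v)).
Qed.

Lemma pfo_free_swap p v : pfo_free (pfo_swap p) v = pfo_free p (other v).
Proof.
elim: p v => [a z|z1 z2|p IHp q IHq|p IHp|z p IHp|z p IHp] v /=;
  rewrite ?IHp ?IHq //; by case: v; do ?case: z; do ?case: z1; do ?case: z2.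
Qed.

Lemma pfo_wf_swap p : pfo_wf (pfo_swap p) = pfo_wf p.
Proof.
by elim: p => //= [p -> q -> | z p ->] //; rewrite pfo_free_swap otherK.
Qed.

Definition pfo_unary p := pfo_wf p && ~~ pfo_free p VY.

Lemma pfo_sat_unary p u env : pfo_unary p -> (pfo_sat u env p <-> sat_at u (env VX) p).
Proof.
case/andP=> _ /negbTE notY; apply: eq_pfo_sat => -[] //; by rewrite notY.
Qed.

Lemma pfo_sat_swap_unary p u env :
  pfo_unary p -> (pfo_sat u env (pfo_swap p) <-> sat_at u (env VY) p).
Proof. by move=> up; rewrite pfo_sat_swap pfo_sat_unary. Qed.

(* All quantifiers are bounded, so satisfaction is decidable; this gives [pfo_or] its
   disjunctive meaning without classical logic. *)
Fixpoint pfo_eval u env p : bool :=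
  match p with
  | PSym a z => (env z < size u) && (nth a u (env z) == a)
  | PLt z1 z2 => env z1 < env z2
  | PAnd p q => pfo_eval u env p && pfo_eval u env q
  | PNot p => ~~ pfo_eval u env p
  | PExLt z p => has (fun m => pfo_eval u (upd env (other z) m) p) (iota 0 (env z))
  | PEx z p => has (fun m => pfo_eval u (upd env z m) p) (iota 0 (size u))
  end.

Lemma pfo_evalP u env p : reflect (pfo_sat u env p) (pfo_eval u env p).
Proof.
elim: p env => [a z|z1 z2|p IHp q IHq|p IHp|z p IHp|z p IHp] env /=.
- by apply: (iffP andP) => -[zu na]; split=> //; apply/eqP.
- exact: idP.
- by apply: (iffP andP) => -[/IHp sp /IHq sq].
- by apply: (iffP negP) => np /IHp.
- apply: (iffP hasP) => [[m]|[m [mz sm]]]; last by exists m; rewrite ?mem_iota //; apply/IHp.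
  by rewrite mem_iota => /andP[_ mz] /IHp sm; exists m.
- apply: (iffP hasP) => [[m]|[m [mu sm]]]; last by exists m; rewrite ?mem_iota //; apply/IHp.
  by rewrite mem_iota => /andP[_ mu] /IHp sm; exists m.
Qed.

Definition pfo_true : pfo S := PNot (PLt VX VX).
Definition pfo_false : pfo S := PLt VX VX.
Definition pfo_or p q : pfo S := PNot (PAnd (PNot p) (PNot q)).

Lemma pfo_sat_or p q u env :
  pfo_sat u env (pfo_or p q) <-> pfo_sat u env p \/ pfo_sat u env q.
Proof.
split=> [/pfo_evalP|spq]; last first.
  by apply/pfo_evalP; rewrite /= negb_and !negbK; case: spq => /pfo_evalP ->; rewrite ?orbT.
by rewrite /= negb_and !negbK => /orP[] /pfo_evalP; [left | right].
Qed.

Lemma pfo_unary_and p q : pfo_unary p -> pfo_unary q -> pfo_unary (PAnd p q).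
Proof. by rewrite /pfo_unary /= => /andP[-> /negbTE->] /andP[-> /negbTE->]. Qed.

Lemma pfo_unary_or p q : pfo_unary p -> pfo_unary q -> pfo_unary (pfo_or p q).
Proof. exact: pfo_unary_and. Qed.

Section BigConnectives.
Variables (I : eqType) (phi : I -> pfo S).
Hypothesis phi_unary : forall i, pfo_unary (phi i).

Definition pfo_any (l : seq I) := foldr (fun i q => pfo_or (phi i) q) pfo_false l.
Definition pfo_every (l : seq I) := foldr (fun i q => PAnd (phi i) q) pfo_true l.

Lemma pfo_unary_any l : pfo_unary (pfo_any l).
Proof. by elim: l => //= i l IH; apply: pfo_unary_or. Qed.

Lemma pfo_unary_every l : pfo_unary (pfo_every l).
Proof. by elim: l => //= i l IH; apply: pfo_unary_and. Qed.

Lemma pfo_sat_any l u env :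
  pfo_sat u env (pfo_any l) <-> exists2 i, i \in l & pfo_sat u env (phi i).
Proof.
elim: l => [|j l IH]; first by split=> [/=|[]//]; lia.
rewrite -[pfo_any _]/(pfo_or (phi j) (pfo_any l)) pfo_sat_or IH.
split=> [[sj|[i il si]]|[i]].
- by exists j; rewrite ?mem_head.
- by exists i; rewrite // in_cons il orbT.
by rewrite in_cons => /orP[/eqP-> sj|il si]; [left | right; exists i].
Qed.

Lemma pfo_sat_every l u env :
  pfo_sat u env (pfo_every l) <-> {in l, forall i, pfo_sat u env (phi i)}.
Proof.
elim: l => [|j l IH] /=; first by split=> // _; lia.
rewrite -/(pfo_sat u env (pfo_every l)) IH; split=> [[sj sl] i|sl].
  by rewrite in_cons => /orP[/eqP->|/sl].
by split=> [|i il]; apply: sl; rewrite ?mem_head // in_cons il orbT.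
Qed.
End BigConnectives.

Fixpoint pfo_atleast Q k : pfo S :=
  if k is k'.+1 then PExLt VX (PAnd (pfo_swap Q) (pfo_swap (pfo_atleast Q k')))
  else pfo_true.

Lemma pfo_unary_atleast Q k : pfo_unary Q -> pfo_unary (pfo_atleast Q k).
Proof.
move=> /andP[wfQ _]; elim: k => [|k /andP[wfk _]] //.
by rewrite /pfo_unary /= !pfo_wf_swap wfQ wfk andbF.
Qed.

Lemma count_iota_gtP (P : pred nat) k n :
  (exists m, [/\ m < n, P m & k <= count P (iota 0 m)]) <-> k < count P (iota 0 n).
Proof.
elim: n => [|n IH]; first by split=> [[m []]|].
rewrite -addn1 iotaD count_cat /= add0n addn0; split.
  case=> m [mn Pm km]; have [lt_mn|] := ltnP m n.
    by have := IH.1 (ex_intro _ m (And3 lt_mn Pm km)); lia.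
  move=> nm; have mn' : m = n by lia.
  by move: Pm km; rewrite mn' => ->; lia.
move=> kn; have [/IH [m [mn Pm km]]|] := ltnP k (count P (iota 0 n)).
  by exists m; split=> //; lia.
by exists n; split=> //; move: kn; case: (P n); lia.
Qed.

Lemma pfo_sat_atleast Q u N (P : pred nat) :
  pfo_unary Q -> (forall m, m < N -> sat_at u m Q <-> P m) ->
  forall k n, n <= N -> sat_at u n (pfo_atleast Q k) <-> k <= count P (iota 0 n).
Proof.
move=> uQ QP; elim=> [|k IH] n nN; first by split=> // _; rewrite /=; lia.
rewrite /= -count_iota_gtP.
have uk := pfo_unary_atleast k uQ.
split=> -[m]; [case=> mn [] | case=> mn Pm km; exists m; split=> //];
  rewrite !pfo_sat_swap_unary //= /upd /=.
  by move=> /QP Pm /IH km; exists m; split=> //; [apply: Pm | apply: km]; lia.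
by split; [apply/QP | apply/IH] => //; lia.
Qed.

Definition pfo_count_eq Q K k : pfo S :=
  if k < K then PAnd (pfo_atleast Q k) (PNot (pfo_atleast Q k.+1)) else pfo_atleast Q k.

Lemma pfo_unary_count_eq Q K k : pfo_unary Q -> pfo_unary (pfo_count_eq Q K k).
Proof.
move=> uQ; rewrite /pfo_count_eq; case: ifP => _; last exact: pfo_unary_atleast.
by apply: pfo_unary_and; [exact: pfo_unary_atleast | exact (pfo_unary_atleast k.+1 uQ)].
Qed.

Lemma pfo_sat_count_eq Q u N (P : pred nat) K k :
  pfo_unary Q -> k <= K -> (forall m, m < N -> sat_at u m Q <-> P m) ->
  forall n, n <= N -> sat_at u n (pfo_count_eq Q K k) <-> minn (count P (iota 0 n)) K = k.
Proof.
move=> uQ kK QP n nN; have atl := pfo_sat_atleast uQ QP _ nN.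
rewrite /pfo_count_eq; case: ltnP => kK'; last by rewrite atl; split; lia.
rewrite -[sat_at _ _ _]/(sat_at u n (pfo_atleast Q k) /\ ~ sat_at u n (pfo_atleast Q k.+1)).
by rewrite !atl; split=> [[]|]; lia.
Qed.
End Formulas.

Section Attention.
Variable A : fparith.
Hypothesis HA : fp_ok A.
Local Notation F := (fT A).

Definition col D (h : 'I_D -> F) : {ffun 'I_D -> F} := [ffun d => h d].

Lemma colK D (h : 'I_D -> F) : col h = h :> ('I_D -> F).
Proof. by apply: functional_extensionality => d; rewrite ffunE. Qed.

Definition cols D (H : mat A D) n := [seq col (H m) | m <- iota 0 n].

Lemma fsum_nonzero (s : seq F) : fsum s = fsum [seq x <- s | x != fzero A].
Proof.
have drop_zeros t : fsum ([seq x <- s | x == fzero A] ++ t) = fsum t.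
  by elim: s => //= a s IH; case: eqP => // ->; rewrite cat_cons (fsum_zero HA).
by rewrite -(fsum_perm HA (permEl (perm_filterC (pred1 (fzero A)) s))) drop_zeros.
Qed.

Lemma fsum_eq_count_upto N (s1 s2 : seq F) :
  eq_count_upto N.+1 s1 s2 ->
  count (predC1 (fzero A)) s1 <= N -> count (predC1 (fzero A)) s2 <= N ->
  fsum s1 = fsum s2.
Proof.
move=> eqN le1 le2; rewrite fsum_nonzero [RHS]fsum_nonzero; apply: (fsum_perm HA).
apply/allP => v _; apply/eqP; rewrite !count_filter.
have [->|vz] := eqVneq v (fzero A).
  by rewrite !(@eq_count _ _ pred0) ?count_pred0 // => x /=; case: eqP => // ->.
have cnt s : count (fun x => (x == v) && (x != fzero A)) s = count_mem v s.
  by apply: eq_count => x /=; case: eqP => // ->; rewrite vz.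
have nz s : count_mem v s <= count (predC1 (fzero A)) s.
  by apply: sub_count => x /= /eqP ->.
by rewrite !cnt; have := eqN v; have := nz s1; have := nz s2; lia.
Qed.

Definition attn_score D (ly : layer A D) (hn g : 'I_D -> F) : F :=
  fdiv (dotF A (mv A (WQ A D ly) hn) (mv A (WK A D ly) g)) (fsqrt (natF A D)).

Definition attn_cols D (ly : layer A D) (hn : 'I_D -> F) (cs : seq {ffun 'I_D -> F})
    (d : 'I_D) : F :=
  let scores := [seq attn_score ly hn g | g : {ffun 'I_D -> F} <- cs] in
  let den := fsum (map (aha_ind scores) scores) in
  fsum [seq fmul (fdiv (aha_ind scores (attn_score ly hn g)) den) (mv A (WV A D ly) g d)
       | g : {ffun 'I_D -> F} <- cs].

Lemma attn_cols_prefix D (ly : layer A D) (H : mat A D) n d :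
  attn A ly H n d = attn_cols ly (H n) (cols H n) d.
Proof.
have scoresE : [seq attn_score ly (H n) g | g : {ffun 'I_D -> F} <- cols H n] =
               [seq attn_score ly (H n) (H m) | m <- iota 0 n].
  by rewrite -map_comp; apply: eq_map => m /=; rewrite colK.
rewrite /attn_cols scoresE /attn /aha_weights /=; congr fsum.
rewrite /cols -[X in _ = X]map_comp; apply/eq_in_map => m.
rewrite mem_iota => /andP[_ mn] /=.
rewrite (nth_map (fzero A)) ?size_map ?size_iota //.
by rewrite (nth_map 0) ?size_iota // nth_iota // add0n colK.
Qed.

Lemma attn_cols_count_upto : exists K, forall D (ly : layer A D) hn c c' d,
  eq_count_upto K c c' -> attn_cols ly hn c d = attn_cols ly hn c' d.
Proof.
have [T fsumT] := fsum_threshold HA.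
exists (maxn T (Nmax A).+1) => D ly hn c c' d eqK.
have K_gt0 : 0 < maxn T (Nmax A).+1 by rewrite leq_max orbT.
have few_nonzero (cs : seq {ffun 'I_D -> F})
    (s := [seq attn_score ly hn g | g : {ffun 'I_D -> F} <- cs]) :
    count (predC1 (fzero A))
      [seq fmul (fdiv (aha_ind s (attn_score ly hn g)) (fsum (map (aha_ind s) s)))
                (mv A (WV A D ly) g d) | g : {ffun 'I_D -> F} <- cs] <= Nmax A.
  apply: leq_trans (aha_Nmax HA s); rewrite /aha_weights /= {2}/s -map_comp !count_map.
  by apply: sub_count => g /=; apply: contraNN => /eqP ->; rewrite (mul_zero HA).
move: (few_nonzero c) (few_nonzero c'); rewrite /attn_cols.
set sc := [seq attn_score ly hn g | g : {ffun 'I_D -> F} <- c].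
set sc' := [seq attn_score ly hn g | g : {ffun 'I_D -> F} <- c'].
have indE : aha_ind sc = aha_ind sc'.
  apply: functional_extensionality => x.
  by rewrite /aha_ind /sc /sc' !all_map (eq_count_upto_all _ eqK K_gt0).
have ind_ge0 x : fle (fzero A) (aha_ind sc x).
  by rewrite /aha_ind /fle; case: ifP => _; rewrite (fval_zero HA) ?(fval_one HA).
have denE : fsum (map (aha_ind sc) sc) = fsum (map (aha_ind sc') sc').
  rewrite -indE {2}/sc /sc' -!map_comp; apply: fsumT.
  - by rewrite all_map; apply/allP => g _; apply: ind_ge0.
  - by rewrite all_map; apply/allP => g _; apply: ind_ge0.
  - by apply: eq_count_upto_map eqK _; rewrite leq_maxl.
rewrite -denE -indE; apply: fsum_eq_count_upto.
by apply: eq_count_upto_map eqK _; rewrite leq_maxr.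
Qed.
End Attention.

Section Definability.
Variables (A : fparith) (Sigma : finType).
Hypothesis HA : fp_ok A.
Local Notation F := (fT A).

Definition pfo_definable (Y : eqType) (f : seq Sigma -> nat -> Y) :=
  forall y, exists phi : pfo (option Sigma), pfo_unary phi /\
    forall w n, n <= size w -> (f w n = y <-> sat_at (barw w) n phi).

Lemma pfo_definable_map (Y : finType) (Z : eqType) (f : seq Sigma -> nat -> Y)
    (e : Y -> Z) (g : seq Sigma -> nat -> Z) :
  pfo_definable f -> (forall w n, n <= size w -> g w n = e (f w n)) -> pfo_definable g.
Proof.
move=> /fin_all_exists[phi phiP] gE z.
exists (pfo_any phi [seq y <- enum Y | e y == z]); split.
  by apply: pfo_unary_any => y; case: (phiP y).
move=> w n nw; rewrite pfo_sat_any gE //; split=> [ez|[y]].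
  by exists (f w n); [rewrite mem_filter ez eqxx mem_enum | exact/((phiP _).2 w n nw)].
by rewrite mem_filter => /andP[/eqP <- _] /((phiP y).2 w n nw) <-.
Qed.

Lemma pfo_definable_pair (Y Z : eqType) (f : seq Sigma -> nat -> Y)
    (g : seq Sigma -> nat -> Z) :
  pfo_definable f -> pfo_definable g -> pfo_definable (fun w n => (f w n, g w n)).
Proof.
move=> df dg [y z]; have [phi [uphi phiP]] := df y; have [psi [upsi psiP]] := dg z.
exists (PAnd phi psi); split; first exact: pfo_unary_and.
by move=> w n nw /=; rewrite -(phiP w n nw) -(psiP w n nw); split=> [[-> ->]|[-> ->]].
Qed.

Lemma pfo_definable_letter : pfo_definable (fun w n => nth None (barw w) n).
Proof.
move=> a; exists (PSym a VX); split=> // w n nw.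
have nbw : n < size (barw w) by rewrite size_rcons size_map ltnS.
by rewrite /= (set_nth_default a) //; split=> [|[]].
Qed.

(* Thresholded at K so that the counts range over a finite type. *)
Definition prefix_counts K D (H : mat A D) n : {ffun {ffun 'I_D -> F} -> 'I_K.+1} :=
  [ffun g => inord (minn (count_mem g (cols H n)) K)].

Definition col_definable D (G : seq Sigma -> mat A D) :=
  pfo_definable (fun w n => col (G w n)).

Lemma pfo_definable_prefix_counts K D (G : seq Sigma -> mat A D) :
  col_definable G -> pfo_definable (fun w n => prefix_counts K (G w) n).
Proof.
move=> /fin_all_exists[phi phiP] c.
pose count_c g := pfo_count_eq (phi g) K (c g).
have uphi g : pfo_unary (phi g) by case: (phiP g).
exists (pfo_every count_c (enum {ffun 'I_D -> F})); split.
  by apply: pfo_unary_every => g; apply: pfo_unary_count_eq.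
move=> w n nw; rewrite pfo_sat_every.
have count_cP g : sat_at (barw w) n (count_c g) <->
    minn (count_mem g (cols (G w) n)) K = c g.
  rewrite (pfo_sat_count_eq (N := n) (P := fun m => col (G w m) == g)) ?count_map //.
    by rewrite -ltnS.
  move=> m mn; rewrite -((phiP g).2 w m); last by lia.
  by split=> [->|/eqP].
have minnK g : minn (count_mem g (cols (G w) n)) K < K.+1 by rewrite ltnS geq_minr.
split=> [cE g _|cP]; first by apply/count_cP; rewrite -cE ffunE inordK.
apply/ffunP => g; apply: val_inj; rewrite ffunE /= inordK //.
by apply/count_cP/cP; rewrite mem_enum.
Qed.

Lemma simulated_mat_col_definable D (G : seq Sigma -> mat A D) :
  col_definable G -> simulated_mat G.
Proof.
move=> dG d f.
have [phi [/andP[wf_phi noY] phiP]] :=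
  pfo_definable_map (e := fun h : {ffun 'I_D -> F} => h d) (g := fun w n => G w n d) dG
    (fun w n _ => esym (ffunE _ _)) f.
by exists phi.
Qed.

Lemma col_definable_H0 (T : transformer A Sigma) : col_definable (H0 T).
Proof.
by apply: (pfo_definable_map (e := fun a => col (temb A Sigma T a))) pfo_definable_letter _.
Qed.

Lemma col_definable_ffn_sub D (ly : layer A D) (G : seq Sigma -> mat A D) :
  col_definable G -> col_definable (fun w => ffn_sub A ly (G w)).
Proof.
(* [ffn_sub] reads only the column at the position it is evaluated at. *)
pose e (g : {ffun 'I_D -> F}) := col (ffn_sub A ly (fun=> g) 0).
by move=> dG; apply: (pfo_definable_map (e := e)) dG _ => w n _; rewrite /e colK.
Qed.

Lemma eq_count_upto_prefix_counts K D (H : mat A D) n :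
  eq_count_upto K (cols H n) (seq_of_counts (val \o prefix_counts K H n)).
Proof.
by move=> g; rewrite count_mem_seq_of_counts /= ffunE inordK ?ltnS ?geq_minr // -minnA minnn.
Qed.

Lemma col_definable_attn_sub D (ly : layer A D) (G : seq Sigma -> mat A D) :
  col_definable G -> col_definable (fun w => attn_sub A ly (G w)).
Proof.
have [K attnK] := attn_cols_count_upto HA.
pose e (gc : {ffun 'I_D -> F} * {ffun {ffun 'I_D -> F} -> 'I_K.+1}) :=
  col (LN A (ln1_g A D ly) (ln1_b A D ly) (ln1_eps A D ly)
         (Defs.addv A (attn_cols ly gc.1 (seq_of_counts (val \o gc.2))) gc.1)).
move=> dG; apply: (pfo_definable_map (e := e)
  (pfo_definable_pair dG (pfo_definable_prefix_counts (K := K) dG))) => w n _.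
have attnE : attn A ly (G w) n =
    attn_cols ly (col (G w n)) (seq_of_counts (val \o prefix_counts K (G w) n)).
  apply: functional_extensionality => d; rewrite attn_cols_prefix colK.
  exact/attnK/eq_count_upto_prefix_counts.
by rewrite /attn_sub attnE /e /= colK.
Qed.

Lemma size_run D (ls : seq (layer A D)) H : size (run A ls H) = (2 * size ls).+1.
Proof. by elim: ls H => [|l ls IH] H //=; rewrite IH; lia. Qed.

Lemma col_definable_run D (ls : seq (layer A D)) (G : seq Sigma -> mat A D) k :
  col_definable G -> k <= 2 * size ls ->
  col_definable (fun w => nth (G w) (run A ls (G w)) k).
Proof.
elim: ls G k => [|l ls IH] G [|[|k]] dG //= k_le.
- exact: col_definable_attn_sub.
- have dG' := col_definable_ffn_sub l (col_definable_attn_sub l dG).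
  have k_le' : k <= 2 * size ls by move: k_le; rewrite mulnS !ltnS.
  apply: (pfo_definable_map (e := id) (IH _ k dG' k_le')) => w n _.
  by rewrite (set_nth_default (G w)) // size_run ltnS.
Qed.
End Definability.

Theorem mainTheorem15 (A : fparith) (Sigma : finType) (HA : fp_ok A)
    (T : transformer A Sigma) :
  (forall k : nat, k <= 2 * size (tlayers T) ->
     simulated_mat (fun w => Hstate T w k)) /\
  simulated_scalar (output T).
Proof.
set L := 2 * size (tlayers T).
have dH k : k <= L -> col_definable (fun w => Hstate T w k).
  by move=> kL; have := col_definable_run HA (col_definable_H0 (T := T)) kL.
split=> [k kL|f]; first exact/simulated_mat_col_definable/dH.
pose out (h : {ffun 'I_(tD T) -> fT A}) :=
  fadd (fsum [seq fmul (ttheta A Sigma T d) (h d) | d <- enum 'I_(tD T)]) (tb A Sigma T).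
have [phi [/andP[wf_phi noY] phiP]] :=
  pfo_definable_map (e := out) (g := fun w n => out (col (Hstate T w L n))) (dH L (leqnn L))
    (fun w n _ => erefl) f.
have outE w : output T w = out (col (Hstate T w L (size w))).
  by rewrite /output /out; congr (fadd (fsum _) _); apply: eq_map => d; rewrite ffunE.
by exists phi; split=> //; split=> // w; rewrite outE; apply: phiP.
Qed.
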